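(* Let $f(x_1,x_2,x_3)\in\mathbf{Z}[x_1,x_2,x_3]$ be a polynomial of degree two with coprime coefficients and let $B\ge1$. Then at least one of the following holds: (i) $\|f\|=O(B^{20})$ (with an absolute implied constant); (ii) there is a quadratic polynomial $g\in\mathbf{Z}[x_1,x_2,x_3]$, not proportional to $f$, such that $g(\mathbf{a})=0$ for every $\mathbf{a}\in\mathbf{Z}^3\cap[-B,B]^3$ with $f(\mathbf{a})=0$.
   Context: For a polynomial $P$, $\|P\|$ denotes the maximum modulus of its coefficients. *)

From mathcomp Require Import all_boot all_order all_algebra.
From mathcomp Require Import mpoly.
From mathcomp Require Import reals.
Set Implicit Arguments. Unset Strict Implicit. Unset Printing Implicit Defensive.
Import Order.TTheory GRing.Theory Num.Theory.
Local Open Scope ring_scope.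

(* Polynomials in Z[x1,x2,x3] are {mpoly int[3]}; msize p = 1 + total degree
   (msize 0 = 0), so "degree two" is msize p = 3. *)

Definition coef_norm (p : {mpoly int[3]}) : nat :=
  \max_(m <- msupp p) `|p@_m|%N.

Definition coprime_coefs (p : {mpoly int[3]}) : bool :=
  (\big[gcdn/0%N]_(m <- msupp p) `|p@_m|%N) == 1%N.

Definition proportional (f g : {mpoly int[3]}) : Prop :=
  exists a b : int, ((a != 0) || (b != 0)) /\ a *: g = b *: f.

Definition in_box (R : realType) (B : R) (a : 'I_3 -> int) : Prop :=
  forall i, `|(a i)%:~R| <= B.

(* The quadratic polynomials vanishing at the zeros of f in the box form the
   left kernel of the matrix of values of the ten quadratic monomials at those
   zeros, and f lies in it.  If this kernel has dimension at least two, another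
   element gives g.  Otherwise it is the line through f and the matrix has rank
   nine; the cofactor vector of nine independent rows is then a nonzero integral
   point of that line whose entries, determinants of 10 x 10 matrices with
   entries at most B^2, are at most 10! B^20.  As f is primitive, this vector is
   an integral multiple of f, whence ||f|| <= 10! B^20. *)

From mathcomp Require Import all_boot all_order all_algebra all_fingroup.
From mathcomp Require Import mpoly reals zify.
Set Implicit Arguments. Unset Strict Implicit. Unset Printing Implicit Defensive.
Import Order.TTheory GRing.Theory Num.Theory.

Lemma card_quadratic_monomials : #|{: 'X_{1..3 < 3}}| <= 10.
Proof.
pose exps := [:: [:: 0; 0; 0]; [:: 0; 0; 1]; [:: 0; 0; 2]; [:: 0; 1; 0]; [:: 0; 1; 1];
                 [:: 0; 2; 0]; [:: 1; 0; 0]; [:: 1; 0; 1]; [:: 1; 1; 0]; [:: 2; 0; 0]].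
pose e (t : 'X_{1..3 < 3}) : seq nat := val (val t).
have e_inj : injective e by move=> t t' E; do 3 apply: val_inj.
have e_exps t : e t \in exps.
  case: t => [[[s sz]]]; rewrite /e /mdeg /= unlock /=.
  case: s sz => [|a [|b [|c [|]]]] //= _.
  by case: a => [|[|[|a]]]; case: b => [|[|[|b]]]; case: c => [|[|[|c]]];
    rewrite ?addnS ?addSn.
rewrite cardE -(size_map e) -[10]/(size exps).
apply: uniq_leq_size; first by rewrite map_inj_uniq ?enum_uniq.
by move=> _ /mapP[t _ ->].
Qed.

Local Open Scope ring_scope.

Section CofactorRow.
Variables (F : fieldType) (r : nat).
Implicit Types (A : 'M[F]_(r, r.+1)) (w : 'rV[F]_r.+1).

Local Notation stack w A := (col_mx (w : 'rV_r.+1) A : 'M_r.+1).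

Definition cofactor_row A : 'rV_r.+1 := \row_j \det (stack (delta_mx 0 j) A).

Lemma col_mx_row0 A w j : stack w A 0 j = w 0 j.
Proof. by rewrite mxE; case: splitP => [i _|[]//]; rewrite ord1. Qed.

Lemma cofactor_col_mx A w w' j : cofactor (stack w A) 0 j = cofactor (stack w' A) 0 j.
Proof.
rewrite /cofactor; congr (_ * \det _); apply/matrixP => i l; rewrite !mxE.
by case: splitP => // k; rewrite ord1.
Qed.

Lemma det_col_mx A w : \det (stack w A) = \sum_j w 0 j * cofactor_row A 0 j.
Proof.
rewrite (expand_det_row _ 0); apply: eq_bigr => j _; rewrite col_mx_row0 mxE.
rewrite (expand_det_row _ 0) (bigD1 j) //= big1 ?addr0.
  by rewrite col_mx_row0 mxE !eqxx mul1r (cofactor_col_mx A w (delta_mx 0 j)).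
by move=> l /negPf nlj; rewrite col_mx_row0 mxE nlj andbF mul0r.
Qed.

Lemma cofactor_row_ker A : cofactor_row A *m A^T = 0.
Proof.
apply/matrixP => z i; rewrite !mxE ord1.
transitivity (\det (stack (row i A) A)).
  by rewrite det_col_mx; apply: eq_bigr => j _; rewrite !mxE mulrC.
apply: (determinant_alternate (neq_lift 0 i)) => l.
rewrite col_mx_row0 !mxE; case: splitP => k; first by rewrite ord1 mxE.
by rewrite /= /bump /= => [[/val_inj ->]].
Qed.

Lemma cofactor_row_neq0 A : row_free A -> cofactor_row A != 0.
Proof.
move=> freeA; have [j Aj] : exists j, ~~ ((delta_mx 0 j : 'rV_r.+1) <= A)%MS.
  apply/existsP; apply: contraT; rewrite negb_exists => /forallP Adelta.
  have /mxrankS : (1%:M <= A)%MS.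
    by apply/row_subP => j; rewrite row1; apply: negbNE (Adelta j).
  by rewrite mxrank1 ltnNge rank_leq_row.
apply: contraNneq Aj => /matrixP/(_ 0 j); rewrite !mxE => /eqP.
apply: contraTT => Aj; rewrite -unitfE -unitmxE -row_free_unit /row_free.
have -> : \rank (stack (delta_mx 0 j) A) = \rank ((delta_mx 0 j : 'rV_r.+1) + A)%MS.
  by rewrite addsmxE.
rewrite eqn_leq rank_leq_row -{1}(eqP freeA).
by rewrite (ltn_leqif (mxrank_leqif_sup (addsmxSr _ _))) addsmx_sub submx_refl andbT.
Qed.

End CofactorRow.

Section DetVector.
Variables (F : fieldType) (S : F -> Prop).
Hypotheses (S0 : S 0) (S1 : S 1).

Definition det_over n (x : F) := exists2 X : 'M[F]_n, x = \det X & forall i l, S (X i l).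

Lemma row_free_det_vector r n (A : 'M[F]_(r, n)) :
  n = r.+1 -> row_free A -> (forall i l, S (A i l)) ->
  exists v : 'rV_n, [/\ v != 0, v *m A^T = 0 & forall j, det_over n (v 0 j)].
Proof.
move=> n_eq; subst n => freeA SA.
exists (cofactor_row A); split; [exact: cofactor_row_neq0 | exact: cofactor_row_ker |].
move=> j; exists (col_mx (delta_mx 0 j : 'rV_r.+1) A : 'M_r.+1); first by rewrite mxE.
move=> i l; rewrite mxE; case: splitP => k _ //; rewrite mxE.
by case: (_ && _).
Qed.

Lemma ker_line_det_vector k n (M : 'M[F]_(k, n)) (u : 'rV_n) :
  (forall i l, S (M i l)) -> u != 0 -> u *m M^T = 0 -> (kermx M^T <= u)%MS ->
  exists v : 'rV_n, [/\ v != 0, (v <= u)%MS & forall j, det_over n (v 0 j)].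
Proof.
move=> SM u_neq0 uM keru.
have ukerM : (u <= kermx M^T)%MS by apply/sub_kermxP.
have rankM : n = (\rank M).+1.
  have := mxrankS keru; have := mxrankS ukerM.
  rewrite rank_rV u_neq0 mxrank_ker mxrank_tr; have := rank_leq_col M; lia.
pose A := rowsub (maxrankfun M) M.
have SA i l : S (A i l) by rewrite mxE.
have [v [v_neq0 vA detv]] := row_free_det_vector rankM (maxrowsub_free M) SA.
exists v; split => //.
suff kerAu : (kermx A^T <= u)%MS by apply: submx_trans kerAu; apply/sub_kermxP.
have uA : u *m A^T = 0.
  have -> : A^T = colsub (maxrankfun M) M^T by apply/matrixP => i l; rewrite !mxE.
  by rewrite mulmx_colsub uM; apply/matrixP => i l; rewrite !mxE.
have ukerA : (u <= kermx A^T)%MS by apply/sub_kermxP.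
rewrite -(mxrank_leqif_sup ukerA).2 mxrank_ker mxrank_tr eq_maxrowsub rank_rV u_neq0.
by apply/eqP; lia.
Qed.

End DetVector.

Lemma det_int (R : archiNumDomainType) n (X : 'M[R]_n) :
  (forall i l, X i l \is a Num.int) -> \det X \is a Num.int.
Proof.
move=> Xint; apply: rpred_sum => s _.
apply: rpredM; first by apply/rpredX; rewrite rpredN rpred1.
by apply: rpred_prod => i _; exact: Xint.
Qed.

Lemma det_norm_le (R : numDomainType) n (X : 'M[R]_n) K :
  (forall i l, `|X i l| <= K) -> `|\det X| <= (n`!)%:R * K ^+ n.
Proof.
move=> XK; apply: le_trans (ler_norm_sum _ _ _) _.
have -> : (n`!)%:R * K ^+ n = \sum_(s : 'S_n) K ^+ n.
  by rewrite sumr_const card_Sn mulr_natl.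
apply: ler_sum => s _.
rewrite normrM normrX normrN normr1 expr1n mul1r normr_prod.
rewrite -[X in K ^+ X](card_ord n) -prodr_const.
by apply: ler_prod => i _; rewrite normr_ge0 XK.
Qed.

Lemma ker_line_small_int_vector (R : archiNumFieldType) k n (M : 'M[R]_(k, n))
    (u : 'rV_n) (K : R) :
  1 <= K -> (forall i l, M i l \is a Num.int /\ `|M i l| <= K) ->
  u != 0 -> u *m M^T = 0 -> (kermx M^T <= u)%MS ->
  exists2 mu, mu != 0 &
    forall j, mu * u 0 j \is a Num.int /\ `|mu * u 0 j| <= (n`!)%:R * K ^+ n.
Proof.
move=> K_ge1 MK u_neq0 uM keru.
pose S x := x \is a Num.int /\ `|x| <= K.
have S0 : S 0 by rewrite /S normr0 (le_trans ler01 K_ge1).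
have S1 : S 1 by rewrite /S normr1.
have [v [v_neq0 /sub_rVP[mu v_eq] detv]] := ker_line_det_vector S0 S1 MK u_neq0 uM keru.
subst v.
exists mu => [|j]; first by apply: contraNneq v_neq0 => ->; rewrite scale0r.
have [X] := detv j; rewrite mxE => -> SX.
by split; [apply: det_int | apply: det_norm_le] => i l; case: (SX i l).
Qed.

Local Notation nq := #|{: 'X_{1..3 < 3}}|.

Definition qmono (j : 'I_nq) : 'X_{1..3} := enum_val j.

Lemma qmono_inj : injective qmono.
Proof. by move=> j j' /val_inj /enum_val_inj. Qed.

Lemma qmono_onto m : (mdeg m < 3)%N -> exists j, qmono j = m.
Proof. by move=> m_lt3; exists (enum_rank (BMultinom m_lt3)); rewrite /qmono enum_rankK. Qed.

Lemma meval_quadratic (g : {mpoly int[3]}) a : (msize g <= 3)%N ->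
  g.@[a] = \sum_j g@_(qmono j) * 'X_[qmono j].@[a].
Proof.
move=> g_le3; rewrite {1}(mpolywE g_le3) raddf_sum /= (big_enum_val (A := predT)) /=.
by apply: eq_bigr => j _; rewrite mevalZ.
Qed.

Definition in_int_box (N : nat) (a : 'I_3 -> int) := forall i, `|a i| <= N%:Z.

Lemma meval_monomial_norm (N : nat) m a : (mdeg m < 3)%N -> (1 <= N)%N ->
  in_int_box N a -> `|'X_[m].@[a]| <= (N ^ 2)%:Z.
Proof.
move=> m_lt3 N_ge1 aN; rewrite mevalX normr_prod.
apply: (@le_trans _ _ (\prod_(i < 3) N%:Z ^+ m i)).
  by apply: ler_prod => i _; rewrite normrX exprn_ge0 //= lerXn2r ?nnegrE.
rewrite prodrXr -mdegE -natz -natrX natz lez_nat leq_pexp2l //; lia.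
Qed.

Definition coef_row (g : {mpoly int[3]}) : 'rV[rat]_nq := \row_j (g@_(qmono j))%:~R.

Lemma coef_rowZ (c : int) g : coef_row (c *: g) = c%:~R *: coef_row g.
Proof. by apply/rowP => j; rewrite !mxE mcoeffZ rmorphM. Qed.

Lemma coef_row_proportional f g m :
  f@_m != 0 -> proportional f g -> (coef_row g <= coef_row f)%MS.
Proof.
move=> fm_neq0 [a [b [ab_neq0 abfg]]]; have [a0|a_neq0] := eqVneq a 0.
  move: ab_neq0 abfg; rewrite a0 /= scale0r => b_neq0 /(congr1 (mcoeff m))/esym/eqP.
  by rewrite mcoeffZ mcoeff0 mulf_eq0 (negPf b_neq0) (negPf fm_neq0).
apply/sub_rVP; exists (b%:~R / a%:~R).
have := congr1 coef_row abfg; rewrite !coef_rowZ => E.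
by rewrite mulrC -scalerA -E scalerA mulVf ?scale1r ?intr_eq0.
Qed.

Lemma coef_row_scaled (w : 'rV[rat]_nq) :
  exists (D : int) (g : {mpoly int[3]}),
    [/\ D != 0, (msize g <= 3)%N & coef_row g = D%:~R *: w].
Proof.
pose D := \prod_j denq (w 0 j).
have D_neq0 : D != 0 by apply/prodf_neq0 => j _; rewrite denq_neq0.
have Dw_int j : D%:~R * w 0 j \is a Num.int.
  rewrite /D (bigD1 j) //= rmorphM /= mulrAC [X in X * _]mulrC -numqE.
  by apply: rpredM; apply: intr_int.
pose c j := numq (D%:~R * w 0 j).
exists D, (\sum_j c j *: 'X_[qmono j]); split => //.
  apply: leq_trans (msize_sum _ _ _) _; apply/bigmax_leqP_seq => j _ _.
  by apply: leq_trans (msizeZ_le _ _) _; rewrite msizeX; exact: bmdeg.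
apply/rowP => j; rewrite !mxE raddf_sum (bigD1 j) //= big1 => [|l lj].
  by rewrite mcoeffZ mcoeffX eqxx mulr1 addr0 numqK.
by rewrite mcoeffZ mcoeffX (inj_eq qmono_inj) (negPf lj) mulr0.
Qed.

Lemma msize_quadratic (g : {mpoly int[3]}) m :
  (msize g <= 3)%N -> mdeg m = 2%N -> g@_m != 0 -> msize g = 3%N.
Proof.
move=> g_le3 m2 gm_neq0; apply/eqP; rewrite eqn_leq g_le3 /=.
by move: gm_neq0; rewrite -mcoeff_msupp => /msize_mdeg_lt; rewrite m2.
Qed.

Lemma quadratic_coef (f : {mpoly int[3]}) :
  msize f = 3%N -> exists2 m, f@_m != 0 & mdeg m = 2%N.
Proof.
move=> f3.
have [/hasP[m fm /eqP m2]|/hasPn f_lt2] := boolP (has (fun m => mdeg m == 2%N) (msupp f)).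
  by exists m; rewrite -?mcoeff_msupp.
suff : (msize f <= 2)%N by rewrite f3.
rewrite msizeE; apply/bigmax_leqP_seq => m fm _.
by have := msize_mdeg_lt fm; rewrite f3 => m_lt3; have := f_lt2 m fm; lia.
Qed.

Lemma denq_dvd_int (mu : rat) (z : int) :
  mu * z%:~R \is a Num.int -> (`|denq mu| %| `|z|)%N.
Proof.
case/intrP => w muz.
have E : numq mu * z = w * denq mu.
  by apply/eqP; rewrite -(eqr_int rat) !rmorphM /= numqE -muz mulrAC.
have : (`|denq mu| %| `|numq mu| * `|z|)%N by rewrite -abszM E abszM dvdn_mull.
by rewrite Gauss_dvdr // coprime_sym coprime_num_den.
Qed.

Lemma int_of_coprime_coefs (f : {mpoly int[3]}) (mu : rat) : coprime_coefs f ->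
  (forall m, m \in msupp f -> mu * (f@_m)%:~R \is a Num.int) -> mu \is a Num.int.
Proof.
move=> /eqP cop_f muf; suff den1 : `|denq mu|%N = 1%N.
  by rewrite Qint_def -(gtz0_abs (denq_gt0 mu)) den1.
apply/eqP; rewrite -dvdn1 -cop_f; elim: (msupp f) (muf) => [|m s IH] mus.
  by rewrite big_nil dvdn0.
rewrite big_cons dvdn_gcd denq_dvd_int ?mus ?mem_head //=.
by apply: IH => m' m's; apply: mus; rewrite in_cons m's orbT.
Qed.

Section Box.
Variables (N : nat) (f : {mpoly int[3]}).

Definition box_point := {ffun 'I_3 -> 'I_(N.*2.+1)}.

Definition box_coords (p : box_point) : 'I_3 -> int := fun i => (p i)%:Z - N%:Z.

Lemma box_coords_in (p : box_point) : in_int_box N (box_coords p).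
Proof.
move=> i; rewrite /box_coords; have := ltn_ord (p i); move: (nat_of_ord (p i)) => x x_lt.
by apply/ler_normlP; split; lia.
Qed.

Lemma box_coords_onto a : in_int_box N a -> exists p, box_coords p =1 a.
Proof.
move=> aN; have a_lt i : (absz (a i + N%:Z)%R < N.*2.+1)%N.
  by have := aN i; move: (a i) => x /ler_normlP[]; lia.
exists [ffun i => Ordinal (a_lt i)] => i; rewrite /box_coords ffunE /=.
have := aN i; move: (a i) => x /ler_normlP[x_ge x_le].
by rewrite gez0_abs ?addrK //; lia.
Qed.

Local Notation point i := (box_coords (enum_val i)).

Definition zeros_mx : 'M[rat]_(#|{: box_point}|, nq) :=
  \matrix_(i, j) if f.@[point i] == 0 then ('X_[qmono j].@[point i])%:~R else 0.

Lemma coef_row_zeros_mxE g i : (msize g <= 3)%N ->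
  (coef_row g *m zeros_mx^T) 0 i = if f.@[point i] == 0 then (g.@[point i])%:~R else 0.
Proof.
move=> g_le3; rewrite mxE (meval_quadratic _ g_le3) rmorph_sum /=.
case: ifP => fi; first by apply: eq_bigr => j _; rewrite !mxE /= fi rmorphM.
by rewrite big1 // => j _; rewrite !mxE /= fi mulr0.
Qed.

Lemma coef_row_zeros_mxP g : (msize g <= 3)%N ->
  coef_row g *m zeros_mx^T = 0 <-> forall a, in_int_box N a -> f.@[a] = 0 -> g.@[a] = 0.
Proof.
move=> g_le3; split => [gM a /box_coords_onto[p pa] fa | g_van].
  have := coef_row_zeros_mxE (enum_rank p) g_le3; rewrite gM enum_rankK.
  by rewrite !(meval_eq _ pa) fa eqxx mxE => /esym/eqP; rewrite intr_eq0 => /eqP.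
apply/rowP => i; rewrite coef_row_zeros_mxE // mxE.
by case: eqP => // /g_van -> //; exact: box_coords_in.
Qed.

Lemma zeros_mx_entry i j : (1 <= N)%N ->
  zeros_mx i j \is a Num.int /\ `|zeros_mx i j| <= (N ^ 2)%:R.
Proof.
move=> N_ge1; rewrite mxE; case: ifP => _; last by rewrite normr0 ler0n.
split; first exact: intr_int.
rewrite -intr_norm -[(N ^ 2)%:R]/((N ^ 2)%:Z%:~R) ler_int.
by apply: meval_monomial_norm => //; [exact: bmdeg | exact: box_coords_in].
Qed.

End Box.

Lemma fact_expn_le n N :
  (n <= 10)%N -> (1 <= N)%N -> (n`! * (N ^ 2) ^ n <= 10`! * N ^ 20)%N.
Proof. by move=> n_le N_ge1; rewrite leq_mul ?leq_fact // -expnM leq_pexp2l //; lia. Qed.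

Section Dichotomy.
Variables (N : nat) (f : {mpoly int[3]}).
Hypothesis f3 : msize f = 3%N.

Local Notation M := (zeros_mx N f).

Lemma coef_row_ker : coef_row f *m M^T = 0.
Proof. by apply/coef_row_zeros_mxP; rewrite ?f3. Qed.

Lemma quadratic_qmono : exists2 j, f@_(qmono j) != 0 & mdeg (qmono j) = 2%N.
Proof.
have [m fm m2] := quadratic_coef f3; have [|j qj] := @qmono_onto m; first by rewrite m2.
by exists j; rewrite qj.
Qed.

Lemma second_quadric : ~~ (kermx M^T <= coef_row f)%MS ->
  exists g, [/\ msize g = 3%N, ~ proportional f g &
                forall a, in_int_box N a -> f.@[a] = 0 -> g.@[a] = 0].
Proof.
move=> /row_subPn[i]; set w := row i _ => wu.
have wM : w *m M^T = 0 by apply/sub_kermxP; rewrite row_sub.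
have [j fj j2] := quadratic_qmono.
have uj : coef_row f 0 j != 0 by rewrite mxE intr_eq0.
(* Adding [coef_row f] to [w] keeps it in the kernel, outside the line of
   [coef_row f], and makes its j-th entry nonzero. *)
pose w' := if w 0 j == 0 then w + coef_row f else w.
have w'M : w' *m M^T = 0.
  by rewrite /w'; case: ifP => _; rewrite ?mulmxDl wM ?coef_row_ker ?addr0.
have w'u : ~~ (w' <= coef_row f)%MS.
  rewrite /w'; case: ifP => _ //; apply: contra wu => /sub_rVP[c wc].
  by apply/sub_rVP; exists (c - 1); rewrite scalerBl scale1r -wc addrK.
have w'j : w' 0 j != 0.
  by rewrite /w'; case: ifP => [/eqP w0|-> //]; rewrite mxE w0 add0r.
have [D [g [D_neq0 g_le3 gw']]] := coef_row_scaled w'.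
have gj : g@_(qmono j) != 0.
  have := gw'; move/rowP/(_ j); rewrite !mxE => gE.
  by rewrite -(intr_eq0 rat) gE mulf_neq0 ?intr_eq0.
exists g; split; first exact: msize_quadratic g_le3 j2 gj.
  move=> /(coef_row_proportional fj)/sub_rVP[k gk]; apply: (negP w'u).
  apply/sub_rVP; exists (D%:~R^-1 * k).
  by rewrite -scalerA -gk gw' scalerA mulVf ?scale1r ?intr_eq0.
by apply/coef_row_zeros_mxP; rewrite // gw' -scalemxAl w'M scaler0.
Qed.

Lemma coef_norm_small : coprime_coefs f -> (1 <= N)%N ->
  (kermx M^T <= coef_row f)%MS -> (coef_norm f <= 10`! * N ^ 20)%N.
Proof.
move=> cop_f N_ge1 keru.
have u_neq0 : coef_row f != 0.
  have [j fj _] := quadratic_qmono.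
  by apply: contraNneq fj => /rowP/(_ j); rewrite !mxE => /eqP; rewrite intr_eq0.
have [|mu mu_neq0 mu_f] := ker_line_small_int_vector (K := (N ^ 2)%:R) _
  (fun i l => zeros_mx_entry f i l N_ge1) u_neq0 coef_row_ker keru.
  by rewrite ler1n expn_gt0 N_ge1.
have qmono_supp m : m \in msupp f -> exists j, qmono j = m.
  by move=> /msize_mdeg_lt; rewrite f3; exact: qmono_onto.
have /intrP[z muz] : mu \is a Num.int.
  apply: (int_of_coprime_coefs cop_f) => m /qmono_supp[j <-].
  by have [] := mu_f j; rewrite mxE.
rewrite /coef_norm; apply/bigmax_leqP_seq => m /qmono_supp[j <-] _.
have [_] := mu_f j; rewrite mxE muz -rmorphM -intr_norm -natrX -natrM.
rewrite -[_%:R]/((_ : nat)%:Z%:~R) ler_int -abszE lez_nat abszM => bound.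
apply: leq_trans (fact_expn_le card_quadratic_monomials N_ge1).
apply: leq_trans bound; rewrite leq_pmull // absz_gt0.
by apply: contraNneq mu_neq0; rewrite muz => ->.
Qed.

End Dichotomy.

Lemma int_box_of_real_box (R : realType) (B : R) : 1 <= B ->
  exists2 N : nat, (1 <= N)%N /\ N%:R <= B & forall a, in_box B a -> in_int_box N a.
Proof.
move=> B_ge1; have floor_ge1 : 1 <= Num.floor B by rewrite floor_ge_int.
have floorE : (`|Num.floor B|%N)%:Z = Num.floor B.
  by rewrite abszE ger0_norm // (le_trans _ floor_ge1).
exists `|Num.floor B|%N; last by move=> a aB i; rewrite floorE floor_ge_int intr_norm.
by rewrite -lez_nat -[_%:R]/((_ : nat)%:Z%:~R) floorE floor_le.
Qed.

Theorem lemma12 (R : realType) :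
  exists C : R, 0 < C /\
  forall (f : {mpoly int[3]}) (B : R),
    msize f = 3%N -> coprime_coefs f -> 1 <= B ->
    ((coef_norm f)%:R <= C * B ^+ 20) \/
    (exists g : {mpoly int[3]},
        msize g = 3%N /\ ~ proportional f g /\
        forall a : 'I_3 -> int, in_box B a -> f.@[a] = 0 -> g.@[a] = 0).
Proof.
exists (10`!)%:R; split; first by rewrite ltr0n fact_gt0.
move=> f B f3 cop_f /int_box_of_real_box[N [N_ge1 NB] box_N].
have [keru|/(second_quadric f3)[g [g3 not_fg g_van]]] :=
  boolP (kermx (zeros_mx N f)^T <= coef_row f)%MS.
  left; apply: le_trans (_ : ((10`! * N ^ 20)%N)%:R <= _).
    by rewrite ler_nat coef_norm_small.
  by rewrite natrM natrX ler_pM2l ?ltr0n ?fact_gt0 // lerXn2r ?nnegrE ?(le_trans _ NB).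
by right; exists g; split; [|split=> // a /box_N; exact: g_van].
Qed.
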